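(* Let $d\ge2$ be an integer and $a\in\mathbb C$ such that $((d+1)a)^k=1$, where $k$ is the smallest such positive integer. Let $p(t)=a\Bigl((d-1)-\sum_{i=1}^d2t^i\Bigr)$ and put $N=\operatorname{lcm}(k,d+1)$ if $d$ is odd and $N=\operatorname{lcm}(k,2(d+1))$ if $d$ is even. Then the column partial sums of $p$ satisfy $S_{[m+N]}=S_{[m]}$ for all $m\ge1$; in particular $(S_{[m]})_{m\ge1}$ is periodic.
   Context: For a polynomial $p(t)$ of degree $d\ge1$ with $p(0)\neq0$, the column partial sums are $S_{[m]}:=[t^{(m-1)(d+1)}]\dfrac{(tp(t))^m}{(1-t)(1-t^{d+1})}$ for $m\ge1$ (equivalently, the sum of the coefficients of $t^0,\dots,t^{(m-1)(d+1)}$ in $(tp(t))^m/(1-t^{d+1})$). *)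

From HB Require Import structures.
From mathcomp Require Import all_boot all_order all_algebra.
Set Implicit Arguments. Unset Strict Implicit. Unset Printing Implicit Defensive.
Import Order.TTheory GRing.Theory Num.Theory.
Local Open Scope ring_scope.

(* Coefficient of t^n in the formal power series  q(t) / ((1-t)(1-t^D)),
   i.e. q(t) * (sum_i t^i) * (sum_j t^(j D)), written out:
   sum over i, j >= 0 with i + j*D <= n of q_(n - i - j*D). *)
Definition coef_div_1t_1tD (R : nzRingType) (D : nat) (q : {poly R}) (n : nat) : R :=
  \sum_(i < n.+1) \sum_(j < n.+1 | (i + j * D <= n)%N) q`_(n - (i + j * D)).

(* Column partial sum S_[m] of a polynomial p of degree d = (size p).-1:
   S_[m] = [t^((m-1)(d+1))] (t p(t))^m / ((1-t)(1-t^(d+1))). *)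
Definition colsum (R : nzRingType) (p : {poly R}) (m : nat) : R :=
  let d := (size p).-1 in
  coef_div_1t_1tD d.+1 (('X * p) ^+ m) ((m.-1) * d.+1).

Definition p18 (R : nzRingType) (d : nat) (a : R) : {poly R} :=
  a%:P * (((d - 1)%:R)%:P - \sum_(1 <= i < d.+1) 2%:P * 'X^i).

(* Let D = d + 1, q = 1 + t + ... + t^d and F = (t p(t))^(m+1).  Multiples
   M A of M = (1 - t)(1 - t^D) contribute only A_(mD) to the coefficient of
   t^(mD) in F / M, so S_[m+1] depends only on the remainder R = F mod M,
   which has degree at most D and gives S_[m+1] = m R(1) + R(0).  Since M has
   a double root at 1 and is divisible by q, R is pinned down by R(1) = F(1),
   R'(1) = F'(1) and its residue modulo q.  As p = a (D - 2 q), we have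
   t p(t) = a D t mod q, hence F = (a D)^(m+1) t^((m+1) mod D) mod q.  This
   gives 2 D S_[m+1] = (a D)^(m+1) g((m+1) mod D, (-1)^(m+1)) for an explicit
   g, which is invariant under m -> m + N whenever k, D and 2 divide N. *)

From HB Require Import structures.
From mathcomp Require Import all_boot all_order all_algebra zify ring.

Set Implicit Arguments.
Unset Strict Implicit.
Unset Printing Implicit Defensive.

Import Order.TTheory GRing.Theory Num.Theory.
Local Open Scope ring_scope.

Lemma sum_ord_le (R : nzRingType) (G : nat -> R) (n x : nat) : (x <= n)%N ->
  \sum_(i < n.+1 | (i <= x)%N) G i = \sum_(i < x.+1) G i.
Proof.
move=> le_xn; rewrite -(big_mkord (fun i => (i <= x)%N)) -(big_mkord xpredT).
by rewrite (@big_nat_widen _ _ _ 0 x.+1 n.+1).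
Qed.

Section SeriesCoef.
Variables (R : comNzRingType) (D : nat).
Hypothesis D_gt0 : (0 < D)%N.

Lemma coef_div_1t_1tDE (F : {poly R}) n :
  coef_div_1t_1tD D F n = \sum_(l < n.+1) F`_l *+ ((n - l) %/ D).+1.
Proof.
have countE (l : 'I_n.+1) : F`_l *+ ((n - l) %/ D).+1 =
    \sum_(j < n.+1 | (j * D + l <= n)%N) F`_l.
  rewrite (eq_bigl (fun j : 'I_n.+1 => (j <= (n - l) %/ D)%N)); last first.
    by move=> j; rewrite leq_divRL //; have := ltn_ord l; lia.
  rewrite (@sum_ord_le _ (fun _ => F`_l)) ?sumr_const ?card_ord //.
  by rewrite (leq_trans (leq_div _ _)) ?leq_subr.
rewrite (eq_bigr _ (fun l _ => countE l)) /coef_div_1t_1tD.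
rewrite (exchange_big_dep xpredT) //= [RHS](exchange_big_dep xpredT) //=.
apply: eq_bigr => j _.
have [le_jDn|lt_n_jD] := leqP (j * D) n; last first.
  by rewrite !big_pred0 // => i; apply/negbTE; lia.
rewrite (eq_bigl (fun i : 'I_n.+1 => (i <= n - j * D)%N)); last by move=> i; lia.
rewrite [RHS](eq_bigl (fun i : 'I_n.+1 => (i <= n - j * D)%N)); last by move=> i; lia.
rewrite (@sum_ord_le _ (fun i => F`_(n - (i + j * D)))) ?leq_subr //.
rewrite (@sum_ord_le _ (fun i => F`_i)) ?leq_subr //.
rewrite -(big_mkord xpredT (fun i => F`_(n - (i + j * D)))) big_rev_mkord subn0.
by apply: eq_bigr => i _; congr (F`_ _); have := ltn_ord i; lia.
Qed.

Lemma coef_div_1t_1tDD (F G : {poly R}) n :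
  coef_div_1t_1tD D (F + G) n = coef_div_1t_1tD D F n + coef_div_1t_1tD D G n.
Proof.
rewrite /coef_div_1t_1tD -big_split; apply: eq_bigr => i _.
by rewrite -big_split; apply: eq_bigr => j _; rewrite coefD.
Qed.

Lemma coef_div_1t_1tDZ c (F : {poly R}) n :
  coef_div_1t_1tD D (c *: F) n = c * coef_div_1t_1tD D F n.
Proof.
rewrite /coef_div_1t_1tD mulr_sumr; apply: eq_bigr => i _.
by rewrite mulr_sumr; apply: eq_bigr => j _; rewrite coefZ.
Qed.

Lemma coef_div_1t_1tD_sum I (r : seq I) (P : pred I) (F : I -> {poly R}) n :
  coef_div_1t_1tD D (\sum_(i <- r | P i) F i) n =
  \sum_(i <- r | P i) coef_div_1t_1tD D (F i) n.
Proof.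
apply: (big_morph (coef_div_1t_1tD D ^~ n)) => [F1 F2|]; first exact: coef_div_1t_1tDD.
by rewrite -(scale0r 0) coef_div_1t_1tDZ mul0r.
Qed.

Lemma coef_div_1t_1tDXn x n :
  coef_div_1t_1tD D ('X^x : {poly R}) n = (if (x <= n)%N then ((n - x) %/ D).+1 else 0)%:R.
Proof.
rewrite coef_div_1t_1tDE (eq_bigr (fun l : 'I_n.+1 =>
  if l == x :> nat then (((n - l) %/ D).+1)%:R else 0 : R)); last first.
  by move=> l _; rewrite coefXn; case: eqP; rewrite ?mul0rn.
by rewrite -big_mkcond (big_ord1_eq _ (fun l => (((n - l) %/ D).+1)%:R)) ltnS; case: ifP.
Qed.

Lemma coef_div_1t_1tD_mul_denom (F : {poly R}) n :
  coef_div_1t_1tD D (('X - 1) * ('X^D - 1) * F) n = F`_n.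
Proof.
rewrite -[F in LHS]coefK poly_def mulr_sumr coef_div_1t_1tD_sum.
under eq_bigr do rewrite -scalerAr coef_div_1t_1tDZ.
have denomXn l :
    coef_div_1t_1tD D (('X - 1) * ('X^D - 1) * 'X^l : {poly R}) n = (l == n)%:R.
  have -> : ('X - 1) * ('X^D - 1) * 'X^l =
      'X^(l + 1 + D) - 'X^(l + D) - 'X^(l + 1) + 'X^l :> {poly R}.
    by rewrite !exprD expr1; ring.
  have shift x : (if (x <= n)%N then ((n - x) %/ D).+1 else 0) =
      ((if (x + D <= n)%N then ((n - (x + D)) %/ D).+1 else 0) + (x <= n))%N.
    case: (leqP (x + D) n) => [le_xDn|lt_n_xD]; last first.
      by case: leqP => // le_xn; rewrite divn_small //; lia.
    rewrite (_ : x <= n)%N; last lia.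
    by rewrite (_ : n - x = n - (x + D) + 1 * D)%N ?divnDMl ?addn1 //; lia.
  rewrite -!scaleN1r !(coef_div_1t_1tDD, coef_div_1t_1tDZ, coef_div_1t_1tDXn).
  rewrite !addn1 (shift l) (shift l.+1) !natrD.
  have -> : (l <= n)%:R = (l == n)%:R + (l < n)%:R :> R.
    by rewrite leq_eqVlt; case: eqP => [->|_]; rewrite ?ltnn ?addr0 ?add0r.
  ring.
under eq_bigr do rewrite denomXn mulr_natr mulrb.
rewrite -big_mkcond (big_ord1_eq _ (fun i => F`_i)).
by case: ltnP => // /(nth_default 0) ->.
Qed.

Lemma coef_div_1t_1tD_small (P : {poly R}) m :
  (size P <= D.+1)%N -> coef_div_1t_1tD D P (m * D) = m%:R * P.[1] + P`_0.
Proof.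
move=> szP.
have weightE (i : 'I_D.+1) :
    (if (i <= m * D)%N then ((m * D - i) %/ D).+1 else 0)%N = (m + (i == 0 :> nat))%N.
  case: m => [|m]; first by case: i => [[|j] ?] /=; rewrite ?div0n.
  have [-> | i_gt0] := posnP i; first by rewrite subn0 mulnK // addn1.
  have le_iD : (i <= D)%N by rewrite -ltnS.
  rewrite (leq_trans le_iD) ?leq_pmull // addn0.
  rewrite (_ : m.+1 * D - i = D - i + m * D)%N ?divnDMl ?divn_small //; lia.
have PE : P = \poly_(i < D.+1) P`_i.
  apply/polyP => i; rewrite coef_poly; case: ltnP => // le_Di.
  by rewrite nth_default // (leq_trans szP le_Di).
rewrite [in LHS]PE poly_def coef_div_1t_1tD_sum (horner_coef_wide 1 szP) mulr_sumr.
under eq_bigr do rewrite coef_div_1t_1tDZ coef_div_1t_1tDXn weightE natrD mulrDr.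
rewrite big_split /=; congr (_ + _).
  by apply: eq_bigr => i _; rewrite expr1n mulr1 mulrC.
by rewrite big_ord_recl big1 ?mulr1 ?addr0 // => i _; rewrite mulr0.
Qed.
End SeriesCoef.

Definition geom_poly (R : nzRingType) (n : nat) : {poly R} := \sum_(i < n) 'X^i.

Section GeomPoly.
Variables (F : fieldType) (D : nat).
Hypothesis D_gt0 : (0 < D)%N.
Local Notation q := (geom_poly F D).

Lemma geom_polyE : 'X^D - 1 = ('X - 1) * q.
Proof. exact: subrX1. Qed.

Lemma geom_poly_monic : q \is monic.
Proof.
by have := monic_Xn_sub_1 F D_gt0; rewrite geom_polyE -polyC1 monicMl ?monicXsubC.
Qed.

Lemma size_geom_poly : size q = D.
Proof.
have := size_Xn_sub_1 F D_gt0.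
rewrite geom_polyE -polyC1 size_monicM ?monicXsubC ?monic_neq0 ?geom_poly_monic //.
by rewrite size_XsubC => -[].
Qed.

Lemma geom_poly_neq0 : q != 0.
Proof. exact: monic_neq0 geom_poly_monic. Qed.

Lemma horner_geom_poly1 : q.[1] = D%:R.
Proof.
rewrite /geom_poly horner_sum (eq_bigr (fun _ => 1)) => [|i _].
  by rewrite sumr_const card_ord.
by rewrite hornerXn expr1n.
Qed.

Lemma coef0_geom_poly : q`_0 = 1.
Proof.
case: D D_gt0 => // n _.
by rewrite /geom_poly coef_sum big_ord_recl coefXn big1 ?addr0 // => i _; rewrite coefXn.
Qed.

Lemma deriv_geom_poly1 : 2 * q^`().[1] = (D * D.-1)%:R.
Proof.
rewrite /geom_poly raddf_sum horner_sum /=.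
under eq_bigr do rewrite derivXn hornerMn hornerXn expr1n.
by rewrite -natr_sum -natrM -(big_mkord xpredT (fun i => i)) bin2_sum -mul_bin_diag bin1.
Qed.

Lemma coef0_dvdp_geom_poly (P : {poly F}) c e :
  (e < D)%N -> (size P <= D.+1)%N -> q %| P - c *: 'X^e ->
  2 * D%:R * P`_0 = 2 * D%:R * c * (e == 0%N)%:R + 2 * c * e%:R
                    + D.+1%:R * (P.[1] - c) - 2 * P^`().[1].
Proof.
move=> lt_eD szP dvd_q.
set L := (P - c *: 'X^e) %/ q.
have szL : (size L <= 2)%N.
  have szX : (size (c *: 'X^e) <= D)%N.
    by rewrite (leq_trans (size_scale_leq _ _)) // size_polyXn.
  have szPX : (size (P - c *: 'X^e)%R <= D.+1)%N.
    by rewrite (leq_trans (size_polyD _ _)) // size_polyN geq_max szP (leq_trans szX).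
  by rewrite size_divp ?geom_poly_neq0 // size_geom_poly leq_subLR (leq_trans szPX) //; lia.
have PE : P = c *: 'X^e + L * q by rewrite divpK // addrC subrK.
have LE : L = (L`_0)%:P + L`_1 *: 'X.
  apply/polyP => -[|[|i]]; rewrite coefD coefC coefZ coefX ?mulr0 ?mulr1 ?addr0 ?add0r //=.
  by rewrite nth_default // (leq_trans szL).
clearbody L; rewrite {}LE in PE; set L0 := L`_0 in PE; set L1 := L`_1 in PE.
have P1 : P.[1] = c + (L0 + L1) * D%:R.
  by rewrite PE !hornerE horner_geom_poly1 expr1n mulr1.
have dP1 : P^`().[1] = c * e%:R + L1 * D%:R + (L0 + L1) * q^`().[1].
  by rewrite PE !derivE !hornerE horner_geom_poly1 hornerMn hornerXn expr1n.
have P0 : P`_0 = c * (e == 0%N)%:R + L0.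
  rewrite PE coefD coefZ coefXn coef0M coef0_geom_poly coefD coefC coefZ coefX.
  by rewrite /= eq_sym mulr0 addr0 mulr1.
rewrite P0 P1 dP1.
have -> : 2 * (c * e%:R + L1 * D%:R + (L0 + L1) * q^`().[1]) =
    2 * (c * e%:R + L1 * D%:R) + (L0 + L1) * (2 * q^`().[1]) by ring.
by rewrite deriv_geom_poly1 natrM -subn1 natrB // -natr1; ring.
Qed.

Lemma dvdp_geom_poly_Xn_sub1 : q %| 'X^D - 1.
Proof. by rewrite geom_polyE dvdp_mulIr. Qed.

End GeomPoly.

Lemma dvdp_Xn_sub1_modn (R : idomainType) (D m : nat) :
  ('X^D - 1 : {poly R}) %| 'X^m - 'X^(m %% D).
Proof.
rewrite {1}(divn_eq m D) exprD mulnC exprM -{2}['X^(m %% D)]mul1r -mulrBl.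
by rewrite dvdp_mulr // [X in _ %| X]subrX1 dvdp_mulIl.
Qed.

Section DenomRemainder.
Variables (F : fieldType) (D : nat).
Hypothesis D_gt0 : (0 < D)%N.
Local Notation denom := (('X - 1) * ('X^D - 1) : {poly F}).

Lemma size_denom : size denom = D.+2.
Proof.
have mon1 := monicXsubC (1 : F); rewrite polyC1 in mon1.
have := size_XsubC (1 : F); rewrite polyC1 => sz1.
by rewrite size_monicM // ?sz1 ?size_Xn_sub_1 // -size_poly_eq0 size_Xn_sub_1.
Qed.

Lemma denom_neq0 : denom != 0.
Proof. by rewrite -size_poly_eq0 size_denom. Qed.

Lemma coef_div_1t_1tD_modp (G : {poly F}) m :
  (size G <= (m.+1 * D).+1)%N ->
  coef_div_1t_1tD D G (m * D) = m%:R * (G %% denom).[1] + (G %% denom)`_0.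
Proof.
move=> szG; rewrite {1}(divp_eq G denom) coef_div_1t_1tDD mulrC.
rewrite coef_div_1t_1tD_mul_denom // nth_default ?add0r; last first.
  by rewrite size_divp ?denom_neq0 // size_denom /= leq_subLR (leq_trans szG) // mulSn.
apply: coef_div_1t_1tD_small => //.
by have := ltn_modpN0 G denom_neq0; rewrite size_denom.
Qed.

Lemma root_denom1 : denom.[1] = 0.
Proof. by rewrite hornerM !hornerE subrr mul0r. Qed.

Lemma root_deriv_denom1 : denom^`().[1] = 0.
Proof. by rewrite derivM !hornerE expr1n !subrr mulr0 mul0r addr0. Qed.

Lemma horner_modp_denom1 G : (G %% denom).[1] = G.[1].
Proof. by rewrite [in RHS](divp_eq G denom) hornerD hornerM root_denom1 mulr0 add0r. Qed.

Lemma deriv_modp_denom1 G : (G %% denom)^`().[1] = G^`().[1].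
Proof.
rewrite [in RHS](divp_eq G denom) derivD derivM !hornerD.
by rewrite (hornerM _ denom) (hornerM _ denom^`()) root_denom1 root_deriv_denom1 !mulr0 !add0r.
Qed.

Lemma dvdp_subr_modp_denom G : 'X^D - 1 %| G - G %% denom.
Proof. by rewrite {1}(divp_eq G denom) addrK mulrA dvdp_mulIr. Qed.

End DenomRemainder.

Section P18.
Variables (C : numFieldType) (d : nat) (a : C).
Hypothesis d_gt0 : (0 < d)%N.
Local Notation D := d.+1.
Local Notation q := (geom_poly C D).
Local Notation p := (p18 d a).

Lemma p18E : p = a%:P * (D%:R%:P - 2%:P * q).
Proof.
rewrite /p18 /geom_poly -(big_mkord xpredT (fun i => 'X^i)) big_ltn // -mulr_sumr.
rewrite !polyC_natr natrB // -natr1.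
set T := \sum_(1 <= i < D) _; ring.
Qed.

Lemma size_p18 : a != 0 -> size p = D.
Proof.
move=> a_neq0; rewrite p18E size_Cmul // addrC size_polyDl size_polyN size_Cmul
  ?size_geom_poly ?pnatr_eq0 //.
by rewrite size_polyC pnatr_eq0.
Qed.

Lemma horner_p18_1 : p.[1] = - (a * D%:R).
Proof. by rewrite p18E !hornerE horner_geom_poly1; ring. Qed.

Lemma deriv_p18_1 : p^`().[1] = - (a * (D * d)%:R).
Proof.
rewrite p18E !derivE !(hornerCM, hornerD, hornerN, hornerC) -deriv_geom_poly1 //; ring.
Qed.

Lemma dvdp_geom_Xp18_exp n :
  q %| ('X * p) ^+ n - (a * D%:R) ^+ n *: 'X^(n %% D).
Proof.
have -> : ('X * p) ^+ n - (a * D%:R) ^+ n *: 'X^(n %% D) =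
    (('X * p) ^+ n - ((a * D%:R) *: 'X) ^+ n) + (a * D%:R) ^+ n *: ('X^n - 'X^(n %% D)).
  by rewrite scalerBr exprZn addrA subrK.
apply: dvdp_add; last first.
  rewrite -mul_polyC dvdp_mull //.
  exact: dvdp_trans (dvdp_geom_poly_Xn_sub1 _ _) (dvdp_Xn_sub1_modn _ _ _).
rewrite subrXX dvdp_mulr // p18E -mul_polyC.
have -> : 'X * (a%:P * ((D%:R)%:P - 2%:P * q)) - (a * D%:R)%:P * 'X =
    (- (2 * a))%:P * 'X * q by rewrite !rmorphM rmorphN /=; ring.
exact: dvdp_mulIr.
Qed.

Lemma colsum_p18 m : a != 0 ->
  2 * D%:R * colsum p m.+1 =
  (a * D%:R) ^+ m.+1 * (2 * D%:R * ((m.+1 %% D)%N == 0%N)%:R + 2 * (m.+1 %% D)%N%:R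
    - 2 * D%:R * (-1) ^+ m.+1 + D.+1%:R * ((-1) ^+ m.+1 - 1)).
Proof.
move=> a_neq0.
set c := (a * D%:R) ^+ m.+1; set e := (m.+1 %% D)%N; set sg := (-1 : C) ^+ m.+1.
set G := 'X * p; set F := G ^+ m.+1.
have G1 : G.[1] = - (a * D%:R) by rewrite hornerM hornerX mul1r horner_p18_1.
have dG1 : G^`().[1] = D%:R * G.[1].
  rewrite G1 derivM derivX mul1r hornerD (hornerM 'X) hornerX mul1r horner_p18_1 deriv_p18_1.
  by rewrite natrM -natr1; ring.
have F1 : F.[1] = sg * c by rewrite horner_exp G1 exprNn.
have dF1 : F^`().[1] = (m.+1 * D)%:R * (sg * c).
  rewrite deriv_exp hornerMn hornerM horner_exp dG1 -F1 horner_exp natrM -mulr_natl.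
  by rewrite /= exprS; ring.
have szF : (size F <= (m.+1 * D).+1)%N.
  have p_neq0 : p != 0 by rewrite -size_poly_eq0 size_p18.
  by rewrite (leq_trans (size_exp_leq _ _)) // /G mulrC size_mulX // size_p18 // mulnC.
set R := F %% (('X - 1) * ('X^D - 1)).
have colE : colsum p m.+1 = m%:R * R.[1] + R`_0.
  by rewrite /colsum size_p18 //; exact: coef_div_1t_1tD_modp.
have dvd_qR : q %| R - c *: 'X^e.
  rewrite (_ : R - _ = (F - c *: 'X^e) - (F - R)); last by ring.
  apply: dvdp_sub; first exact: dvdp_geom_Xp18_exp.
  apply: dvdp_trans (dvdp_geom_poly_Xn_sub1 _ _) _.
  exact: dvdp_subr_modp_denom.
have szR : (size R <= D.+1)%N.
  by have := ltn_modpN0 F (denom_neq0 C (ltn0Sn d)); rewrite size_denom.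
have := coef0_dvdp_geom_poly (ltn0Sn d) (ltn_pmod _ (ltn0Sn d)) szR dvd_qR.
rewrite horner_modp_denom1 deriv_modp_denom1 F1 dF1 => R0.
by rewrite colE horner_modp_denom1 F1 mulrDr R0 natrM -natr1; ring.
Qed.

Lemma colsum_p18_addn k N m :
  (0 < k)%N -> (D%:R * a) ^+ k = 1 -> (k %| N)%N -> (D %| N)%N -> ~~ odd N ->
  (0 < m)%N -> colsum p (m + N) = colsum p m.
Proof.
move=> k_gt0 root_k k_dvdN D_dvdN N_even; case: m => // m _.
have a_neq0 : a != 0.
  by apply: contra_eq_neq root_k => ->; rewrite mulr0 expr0n gtn_eqF // eq_sym oner_neq0.
apply: (@mulfI _ (2 * D%:R)); first by rewrite mulf_neq0 ?pnatr_eq0.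
rewrite addSn !colsum_p18 //; congr (_ * (_ + _ - _ * _ + _ * (_ - _))).
- by rewrite -addSn exprD -(divnK k_dvdN) mulnC exprM [a * _]mulrC root_k expr1n mulr1.
- by rewrite -addSn -(divnK D_dvdN) addnC modnMDl.
- by rewrite -addSn -(divnK D_dvdN) addnC modnMDl.
- by rewrite -addSn exprD -[(-1) ^+ N]signr_odd (negbTE N_even) mulr1.
- by rewrite -addSn exprD -[(-1) ^+ N]signr_odd (negbTE N_even) mulr1.
Qed.

End P18.

Lemma lcmn_period_spec k d :
  let N := if odd d then lcmn k d.+1 else lcmn k (2 * d.+1) in
  [/\ (k %| N)%N, (d.+1 %| N)%N & ~~ odd N].
Proof.
case: ifP => d_odd.
  split; rewrite ?dvdn_lcml ?dvdn_lcmr //.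
  by apply: contraTN d_odd => /(dvdn_odd (dvdn_lcmr k d.+1)) /=; case: odd.
split; rewrite ?dvdn_lcml ?(dvdn_trans (dvdn_mull _ (dvdnn _)) (dvdn_lcmr _ _)) //.
by apply/negP => /(dvdn_odd (dvdn_trans (dvdn_mulr _ (dvdnn 2)) (dvdn_lcmr k _))).
Qed.

Theorem proposition18 (C : numClosedFieldType) (d : nat) (a : C) (k : nat) :
  (2 <= d)%N ->
  (0 < k)%N ->
  ((d.+1)%:R * a) ^+ k = 1 ->
  (forall j : nat, (0 < j)%N -> (j < k)%N -> ((d.+1)%:R * a) ^+ j != 1) ->
  let N := if odd d then lcmn k d.+1 else lcmn k (2 * d.+1) in
  forall m : nat, (1 <= m)%N -> colsum (p18 d a) (m + N) = colsum (p18 d a) m.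
Proof.
move=> d_ge2 k_gt0 root_k _ N m m_gt0.
have [k_dvdN D_dvdN N_even] := lcmn_period_spec k d.
by have := colsum_p18_addn (ltnW d_ge2) k_gt0 root_k k_dvdN D_dvdN N_even m_gt0.
Qed.
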